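(* Consider the following linear closed-loop model of a lossless modular multilevel converter (MMC) interconnecting an AC network and a DC network. The MMC's total internal energy $W_t$ satisfies $$\tfrac{d}{dt} W_t = P_{\mathrm{dc}} - P_{\mathrm{ac}},$$ where $P_{\mathrm{dc}}$ is the power flowing from the DC network into the MMC and $P_{\mathrm{ac}}$ is the power flowing out of the MMC into the AC network. Write $\Delta W_t = W_t - W_t^\star$ for a constant energy setpoint $W_t^\star$. The MMC AC voltage angle $\theta$ satisfies $\tfrac{d}{dt}\theta = \omega$, and the MMC AC frequency $\omega$ and DC terminal voltage $V^{\mathrm{dc}}_t$ are determined by one of the following two controls (with constant setpoints $\omega^\star$, $V^{\mathrm{dc}\star}_t$, and power setpoints $P^\star_{\mathrm{ac}}=P^\star_{\mathrm{dc}}=0$): (i) hybrid power/energy droop control (unfiltered): $$\omega = \omega^\star + k_p^{\mathrm{ac}}(P^\star_{\mathrm{ac}} - P_{\mathrm{ac}}) + k_w^{\mathrm{ac}}\Delta W_t,\qquad V^{\mathrm{dc}}_t = V^{\mathrm{dc}\star}_t + k_p^{\mathrm{dc}}(P_{\mathrm{dc}} - P^\star_{\mathrm{dc}}) + k_w^{\mathrm{dc}}\Delta W_t,$$ with $k_w^{\mathrm{ac}} > k_p^{\mathrm{ac}}$; (ii) energy-balancing control with ideal proportional-derivative action: $$\omega = \omega^\star + k_p^{\mathrm{ac}}\tfrac{d}{dt}\Delta W_t + k_w^{\mathrm{ac}}\Delta W_t,\qquad V^{\mathrm{dc}}_t = V^{\mathrm{dc}\star}_t + k_p^{\mathrm{dc}}\tfrac{d}{dt}\Delta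 W_t + k_w^{\mathrm{dc}}\Delta W_t.$$ In both cases $k_p^{\mathrm{ac}}, k_p^{\mathrm{dc}}, k_w^{\mathrm{ac}}, k_w^{\mathrm{dc}} > 0$. The linearized AC network (when connected) is $P_{\mathrm{ac}} = b_{\mathrm{ac}}(\theta - \theta_{\mathrm{ac}})$, $\tfrac{d}{dt}\theta_{\mathrm{ac}} = \omega^\star + k_{\mathrm{ac}} P_{\mathrm{ac}}$, with susceptance $b_{\mathrm{ac}}>0$ and AC source droop coefficient $k_{\mathrm{ac}}\ge 0$; when the AC network is disconnected, $P_{\mathrm{ac}}\equiv 0$. The linearized DC network (when connected) is $P_{\mathrm{dc}} = g_{\mathrm{dc}}(V_{\mathrm{dc}} - V^{\mathrm{dc}}_t)$, $V_{\mathrm{dc}} = V^{\mathrm{dc}\star}_t - k_{\mathrm{dc}}P_{\mathrm{dc}}$, with conductance $g_{\mathrm{dc}}>0$ and DC source droop coefficient $k_{\mathrm{dc}}\ge 0$; when the DC network is disconnected, $P_{\mathrm{dc}}\equiv 0$. Then, for either control (i) or (ii), and whether the MMC is connected (a) only to the AC network, (b) only to the DC network, or (c) to both networks, the resulting linear closed-loop system (in the state $\Delta W_t$ together with, when the AC network is connected, the angle difference $\theta-\theta_{\mathrm{ac}}$) has an asymptotically stable equilibrium at the origin; in particular $W_t \to W_t^\star$, $\omega\to\omega^\star$ and $V^{\mathrm{dc}}_t \to V^{\mathrm{dc}\star}_t$ for every initial condition.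
   Context: This is a macroscopic (averaged) MMC model in which fast internal converter dynamics (current control, arm energy balancing, voltage control) are neglected, the MMC is lossless, and the network equations are linearized around the zero-power-flow operating point. The AC source is a voltage source with frequency droop and the DC source is a voltage source with power–voltage droop, each behind an equivalent line (susceptance $b_{\mathrm{ac}}$, resp. conductance $g_{\mathrm{dc}}$). ''Asymptotically stable'' refers to the equilibrium of the linear time-invariant closed-loop ODE. *)

From HB Require Import structures.
From mathcomp Require Import all_boot all_order all_algebra.
From mathcomp Require Import all_classical all_reals all_analysis.
Set Implicit Arguments. Unset Strict Implicit. Unset Printing Implicit Defensive.
Import Order.TTheory GRing.Theory Num.Theory.
Import numFieldNormedType.Exports.
Local Open Scope classical_set_scope.
Local Open Scope ring_scope.

Inductive control := HybridDroop | EnergyPD .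

Inductive connection := ACOnly | DCOnly | ACDC .

Definition ac_connected (c : connection) : bool :=
  match c with DCOnly => false | _ => true end.
Definition dc_connected (c : connection) : bool :=
  match c with ACOnly => false | _ => true end.

Record params (R : realType) := Params {
  kp_ac : R; kp_dc : R; kw_ac : R; kw_dc : R;
  b_ac : R; g_dc : R; k_ac : R; k_dc : R;
  omega_s : R;
  Vt_s : R;
  Wt_s : R
}.

Record signals (R : realType) := Signals {
  Wt : R -> R; theta : R -> R; omega : R -> R; Vt : R -> R;
  Pac : R -> R; Pdc : R -> R; theta_ac : R -> R; Vdc : R -> R
}.

(* The closed-loop model, with power setpoints P_ac^* = P_dc^* = 0. *)
Definition closed_loop (R : realType) (ctrl : control) (conn : connection)
    (p : params R) (s : signals R) : Prop :=
  forall t : R, 0 <= t ->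
  [/\ derivable (Wt s) t 1 /\ derive1 (Wt s) t = Pdc s t - Pac s t,
      derivable (theta s) t 1 /\ derive1 (theta s) t = omega s t,
      match ctrl with
      | HybridDroop =>
          omega s t = omega_s p + kp_ac p * (0 - Pac s t)
                      + kw_ac p * (Wt s t - Wt_s p) /\
          Vt s t = Vt_s p + kp_dc p * (Pdc s t - 0)
                      + kw_dc p * (Wt s t - Wt_s p)
      | EnergyPD =>
          omega s t = omega_s p + kp_ac p * derive1 (Wt s) t
                      + kw_ac p * (Wt s t - Wt_s p) /\
          Vt s t = Vt_s p + kp_dc p * derive1 (Wt s) t
                      + kw_dc p * (Wt s t - Wt_s p)
      end,
      (if ac_connected conn then
         [/\ Pac s t = b_ac p * (theta s t - theta_ac s t),
             derivable (theta_ac s) t 1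
           & derive1 (theta_ac s) t = omega_s p + k_ac p * Pac s t]
       else Pac s t = 0)
    & (if dc_connected conn then
         Pdc s t = g_dc p * (Vdc s t - Vt s t) /\
         Vdc s t = Vt_s p - k_dc p * Pdc s t
       else Pdc s t = 0)].

Definition state_norm (R : realType) (conn : connection) (p : params R)
    (s : signals R) (t : R) : R :=
  if ac_connected conn then
    Num.max `|Wt s t - Wt_s p| `|theta s t - theta_ac s t|
  else `|Wt s t - Wt_s p|.

Definition asymptotically_stable (R : realType) (S : Type)
    (Sol : S -> Prop) (nx : S -> R -> R) : Prop :=
  (forall eps : R, 0 < eps -> exists2 del : R, 0 < del &
     forall s, Sol s -> nx s 0 < del -> forall t, 0 <= t -> nx s t < eps)
  /\ (forall s, Sol s -> nx s t @[t --> +oo] --> (0 : R)).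

(* In every configuration the closed loop is a planar linear ODE for
   z = (W_t - W_t^*, theta - theta_ac), whose matrix A has negative trace and
   positive determinant D, and omega, V_t^dc are affine in z. The quadratic form
   V = D |z|^2 + |adj(A) z|^2 decreases along solutions at rate 2 D |tr A| |z|^2,
   which is at least k V for some k > 0. Instead of integrating this into an
   exponential bound, note that V(z(t)) (1 + k t) is nonincreasing: this gives
   |z(t)|^2 <= C |z(0)|^2 / (1 + k t), hence both Lyapunov stability and
   convergence of z, and thereby of W_t, omega and V_t^dc. *)

From HB Require Import structures.
From mathcomp Require Import all_boot all_order all_algebra.
From mathcomp Require Import all_classical all_reals all_analysis.
From mathcomp Require Import ring lra.
Import Order.TTheory GRing.Theory Num.Theory.
Import numFieldNormedType.Exports.
Local Open Scope classical_set_scope.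
Local Open Scope ring_scope.

Section SumOfSquares.
Context {R : realType}.

Lemma sqr_lt_norm (u eps : R) : 0 < eps -> (u ^+ 2 < eps ^+ 2) = (`|u| < eps).
Proof.
by move=> eps0; rewrite -real_normK ?num_real // ltr_pXn2r // nnegrE ltW.
Qed.

Lemma norm_lt_sqr_sum (u v eps : R) : 0 < eps ->
  u ^+ 2 + v ^+ 2 < eps ^+ 2 -> `|u| < eps.
Proof.
move=> eps0 uv; rewrite -sqr_lt_norm //; apply: le_lt_trans uv.
by rewrite lerDl sqr_ge0.
Qed.

Lemma max_norm_lt_sqr_sum (u v eps : R) : 0 < eps ->
  u ^+ 2 + v ^+ 2 < eps ^+ 2 -> Num.max `|u| `|v| < eps.
Proof.
move=> eps0 uv; rewrite gt_max (norm_lt_sqr_sum _ _ _ eps0 uv).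
by rewrite (norm_lt_sqr_sum v u) // addrC.
Qed.

Lemma cvg0_sqr_sum_max (T : Type) (F : set_system T) (FF : Filter F) (u v : T -> R) :
  u t ^+ 2 + v t ^+ 2 @[t --> F] --> 0 -> Num.max `|u t| `|v t| @[t --> F] --> 0.
Proof.
move=> /cvgrPdist_lt uv0; apply/cvgrPdist_lt => eps eps0.
apply: filterS (uv0 _ (exprn_gt0 2 eps0)) => t.
rewrite !sub0r !normrN ger0_norm ?addr_ge0 ?sqr_ge0 // => uv.
by rewrite ger0_norm ?le_max ?normr_ge0 // max_norm_lt_sqr_sum.
Qed.

Lemma cvg0_sqr_sum_l (T : Type) (F : set_system T) (FF : Filter F) (u v : T -> R) :
  u t ^+ 2 + v t ^+ 2 @[t --> F] --> 0 -> u t @[t --> F] --> 0.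
Proof.
move=> /cvgrPdist_lt uv0; apply/cvgrPdist_lt => eps eps0.
apply: filterS (uv0 _ (exprn_gt0 2 eps0)) => t.
rewrite !sub0r !normrN ger0_norm ?addr_ge0 ?sqr_ge0 //.
exact: norm_lt_sqr_sum.
Qed.

Lemma affine_cvg {T : Type} {F : set_system T} {FF : Filter F} {f u v : T -> R}
    {l : R} (alpha beta : R) :
  u t @[t --> F] --> 0 -> v t @[t --> F] --> 0 ->
  (\forall t \near F, f t = l + alpha * u t + beta * v t) -> f t @[t --> F] --> l.
Proof.
move=> u0 v0 fE.
have : l + alpha * u t + beta * v t @[t --> F] --> l + alpha * 0 + beta * 0.
  by apply: cvgD; [apply: cvgD; [exact: cvg_cst | exact: cvgMl_tmp] | exact: cvgMl_tmp].
rewrite !mulr0 !addr0; apply: cvg_trans; apply: near_eq_cvg.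
by apply: filterS fE => t ->.
Qed.

End SumOfSquares.

Section PlanarHurwitz.
Variables (R : realType) (a b c e : R).

Definition planar_solution (x d : R -> R) := forall t : R, 0 <= t ->
  is_derive t 1 x (a * x t + b * d t) /\ is_derive t 1 d (c * x t + e * d t).

Hypotheses (trace_lt0 : a + e < 0) (det_gt0 : 0 < a * e - b * c).

Let D := a * e - b * c.
Let L := a ^+ 2 + b ^+ 2 + c ^+ 2 + e ^+ 2.
Let q := - (2 * (a + e) * D).
Let k := q / (D + L).

Let DL_gt0 : 0 < D + L.
Proof. by apply: (lt_le_trans det_gt0); rewrite lerDl /L !addr_ge0 ?sqr_ge0. Qed.

Let q_gt0 : 0 < q.
Proof. by rewrite /q oppr_gt0 pmulr_llt0 // pmulr_rlt0. Qed.

Let k_gt0 : 0 < k. Proof. exact: divr_gt0. Qed.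

Let weight_ge1 (t : R) : 0 <= t -> 1 <= 1 + k * t.
Proof. by move=> t0; rewrite lerDl (mulr_ge0 (ltW k_gt0) t0). Qed.

(* The form D |z|^2 + |adj(A) z|^2 (see [planar_lyapE]), written with function
   operations so that [is_derive] instances apply. Since A + adj(A) = tr(A) I and
   adj(A) A = D I, its derivative along solutions is 2 D tr(A) |z|^2. *)
Definition planar_lyap (x d : R -> R) : R -> R :=
  cst (D + e ^+ 2 + c ^+ 2) * (x * x) - cst (2 * (e * b + a * c)) * (x * d)
  + cst (D + b ^+ 2 + a ^+ 2) * (d * d).

Lemma planar_lyapE (x d : R -> R) (t : R) : planar_lyap x d t =
  D * (x t ^+ 2 + d t ^+ 2) + (e * x t - b * d t) ^+ 2 + (a * d t - c * x t) ^+ 2.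
Proof. by rewrite /planar_lyap !fctE; ring. Qed.

Lemma planar_lyap_ge (x d : R -> R) (t : R) :
  D * (x t ^+ 2 + d t ^+ 2) <= planar_lyap x d t.
Proof. by rewrite planar_lyapE -addrA lerDl addr_ge0 ?sqr_ge0. Qed.

Lemma planar_lyap_le (x d : R -> R) (t : R) :
  planar_lyap x d t <= (D + L) * (x t ^+ 2 + d t ^+ 2).
Proof.
have := sqr_ge0 (e * d t + b * x t); have := sqr_ge0 (a * x t + c * d t).
by rewrite planar_lyapE /L; nra.
Qed.

Let mul_scaleR (u v : R) : u *: v = u * v. Proof. by []. Qed.

Section Trajectory.
Variables x d : R -> R.
Hypothesis xd_sol : planar_solution x d.

Lemma planar_lyap_derive (t : R) : 0 <= t ->
  is_derive t 1 (planar_lyap x d) (2 * D * (a + e) * (x t ^+ 2 + d t ^+ 2)).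
Proof.
move=> t0; have [dx dd] := xd_sol t t0; rewrite /planar_lyap; apply: is_derive_eq.
by rewrite !fctE !mul_scaleR /D; ring.
Qed.

Lemma planar_lyap_weighted_le (t : R) : 0 <= t ->
  planar_lyap x d t * (1 + k * t) <= planar_lyap x d 0.
Proof.
move=> t0; pose G := planar_lyap x d * (cst 1 + cst k * id).
have GE (s : R) : G s = planar_lyap x d s * (1 + k * s) by rewrite /G !fctE.
have dG (s : R) : 0 <= s -> is_derive s 1 G
    (- q * (x s ^+ 2 + d s ^+ 2) * (1 + k * s) + k * planar_lyap x d s).
  move=> s0; have := planar_lyap_derive s s0 => dV.
  by apply: is_derive_eq; rewrite !fctE !mul_scaleR /q; ring.
have dG_le0 (s : R) : 0 <= s ->
    - q * (x s ^+ 2 + d s ^+ 2) * (1 + k * s) + k * planar_lyap x d s <= 0.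
  move=> s0; have kV : k * planar_lyap x d s <= q * (x s ^+ 2 + d s ^+ 2).
    have -> : q = k * (D + L) by rewrite /k divfK // lt0r_neq0.
    by rewrite -mulrA ler_wpM2l ?planar_lyap_le // ltW.
  have := mulr_ge0 (mulr_ge0 (ltW q_gt0) (addr_ge0 (sqr_ge0 (x s)) (sqr_ge0 (d s))))
    (mulr_ge0 (ltW k_gt0) s0).
  lra.
have G0 : G 0 = planar_lyap x d 0 by rewrite GE mulr0 addr0 mulr1.
have dGs (s : R) : 0 <= s -> derivable G s 1 /\ derive1 G s <= 0.
  move=> s0; have Gs := dG s s0.
  by split; [exact: ex_derive | rewrite derive1E derive_val dG_le0].
rewrite -GE -G0; clearbody G.
apply: (@ler0_derive1_nincry _ G 0) => // [s|s|].
- by rewrite in_itv /= andbT => /ltW /dGs [].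
- by rewrite in_itv /= andbT => /ltW /dGs [].
- by apply: derivable_within_continuous => s; rewrite in_itv /= andbT => /dGs [].
Qed.

Lemma planar_sqnorm_weighted_le (t : R) : 0 <= t ->
  D * (x t ^+ 2 + d t ^+ 2) * (1 + k * t) <= (D + L) * (x 0 ^+ 2 + d 0 ^+ 2).
Proof.
move=> t0; apply: le_trans (planar_lyap_le x d 0).
apply: le_trans (planar_lyap_weighted_le t t0).
by rewrite ler_wpM2r ?planar_lyap_ge // (le_trans ler01 (weight_ge1 t t0)).
Qed.

End Trajectory.

Lemma planar_sqnorm_bounded : exists2 K : R, 0 < K &
  forall x d, planar_solution x d -> forall t, 0 <= t ->
    x t ^+ 2 + d t ^+ 2 <= K * (x 0 ^+ 2 + d 0 ^+ 2).
Proof.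
exists ((D + L) / D); first by rewrite divr_gt0.
move=> x d sol t t0; rewrite mulrAC ler_pdivlMr // mulrC.
apply: le_trans (planar_sqnorm_weighted_le x d sol t t0).
by rewrite ler_peMr ?weight_ge1 // mulr_ge0 ?(ltW det_gt0) // addr_ge0 ?sqr_ge0.
Qed.

Lemma planar_sqnorm_cvg0 x d : planar_solution x d ->
  x t ^+ 2 + d t ^+ 2 @[t --> +oo] --> 0.
Proof.
move=> sol; apply/cvgrPdist_lt => eps eps0.
set S0 := x 0 ^+ 2 + d 0 ^+ 2.
have S0_ge0 : 0 <= S0 by rewrite addr_ge0 ?sqr_ge0.
have Dke_gt0 : 0 < D * k * eps := mulr_gt0 (mulr_gt0 det_gt0 k_gt0) eps0.
exists ((D + L) * S0 / (D * k * eps)); split; first exact: num_real.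
move=> t tM; have M_ge0 : 0 <= (D + L) * S0 / (D * k * eps) :=
  divr_ge0 (mulr_ge0 (ltW DL_gt0) S0_ge0) (ltW Dke_gt0).
have t_gt0 : 0 < t := le_lt_trans M_ge0 tM.
rewrite ltr_pdivrMr // in tM.
rewrite sub0r normrN ger0_norm ?addr_ge0 ?sqr_ge0 //.
have Dkt_gt0 : 0 < D * k * t := mulr_gt0 (mulr_gt0 det_gt0 k_gt0) t_gt0.
rewrite -(ltr_pM2r Dkt_gt0); apply: le_lt_trans (_ : _ <= (D + L) * S0) _.
  apply: le_trans (planar_sqnorm_weighted_le x d sol t (ltW t_gt0)).
  set S := x t ^+ 2 + d t ^+ 2.
  have -> : D * S * (1 + k * t) = D * S + S * (D * k * t) by ring.
  by rewrite lerDr mulr_ge0 ?(ltW det_gt0) ?addr_ge0 ?sqr_ge0.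
by have -> : eps * (D * k * t) = t * (D * k * eps) by ring.
Qed.

Lemma planar_stable (eps : R) : 0 < eps -> exists2 del : R, 0 < del &
  forall x d, planar_solution x d -> Num.max `|x 0| `|d 0| < del ->
  forall t, 0 <= t -> Num.max `|x t| `|d t| < eps.
Proof.
move=> eps0; have [K K_gt0 bound] := planar_sqnorm_bounded.
have K1_gt0 : 0 < 2 * K + 1 by rewrite ltr_wpDl ?mulr_ge0 // ltW.
set del := eps / (2 * K + 1); have del_gt0 : 0 < del by rewrite divr_gt0.
exists del => // x d sol; rewrite gt_max -!sqr_lt_norm // => /andP[x0 d0] t t0.
apply: max_norm_lt_sqr_sum => //; apply: le_lt_trans (bound x d sol t t0) _.
apply: le_lt_trans (_ : K * (2 * del ^+ 2) < _).
  by rewrite ler_wpM2l ?ltW //; lra.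
have -> : eps = (2 * K + 1) * del by rewrite /del mulrC divfK ?lt0r_neq0.
have := exprn_gt0 2 del_gt0; nra.
Qed.

Lemma planar_cvg0 (x d : R -> R) : planar_solution x d ->
  [/\ x t @[t --> +oo] --> 0, d t @[t --> +oo] --> 0
    & Num.max `|x t| `|d t| @[t --> +oo] --> 0].
Proof.
move=> /planar_sqnorm_cvg0 xd0; split.
- exact: cvg0_sqr_sum_l xd0.
- by apply: (@cvg0_sqr_sum_l _ _ _ _ d x); under eq_fun do rewrite addrC.
- exact: cvg0_sqr_sum_max.
Qed.

End PlanarHurwitz.

Arguments planar_solution {R}.
Arguments planar_stable {R a b c e}.
Arguments planar_cvg0 {R a b c e} trace_lt0 det_gt0 {x d}.

Section ClosedLoop.
Variables (R : realType) (p : params R).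

Definition energy_error (s : signals R) : R -> R := Wt s - cst (Wt_s p).

(* Identically 0 without the AC network; the planar coefficients acting on it
   are then a free choice. *)
Definition angle_diff (conn : connection) (s : signals R) : R -> R :=
  if ac_connected conn then theta s - theta_ac s else cst 0.

Definition dc_den : R := 1 + g_dc p * (k_dc p + kp_dc p).
Definition dc_energy_gain : R := g_dc p * kw_dc p / dc_den.
Definition ac_coupling_gain : R := b_ac p * (1 + g_dc p * k_dc p) / dc_den.

Definition planar_reduction (conn : connection) (a b c e p1 p2 q1 q2 : R)
    (s : signals R) :=
  planar_solution a b c e (energy_error s) (angle_diff conn s) /\
  forall t, 0 <= t ->
    omega s t = omega_s p + p1 * energy_error s t + p2 * angle_diff conn s t /\
    Vt s t = Vt_s p + q1 * energy_error s t + q2 * angle_diff conn s t.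

Lemma energy_errorE (s : signals R) (t : R) : energy_error s t = Wt s t - Wt_s p.
Proof. by []. Qed.

Lemma state_normE conn (s : signals R) :
  state_norm conn p s = fun t => Num.max `|energy_error s t| `|angle_diff conn s t|.
Proof.
apply/funext => t; rewrite /state_norm /angle_diff.
by case: ac_connected => //=; rewrite normr0; apply/esym/max_idPl.
Qed.

Lemma closed_loop_errors ctrl conn (s : signals R) :
  closed_loop ctrl conn p s -> forall t : R, 0 <= t ->
  [/\ is_derive t 1 (energy_error s) (Pdc s t - Pac s t),
      is_derive t 1 (angle_diff conn s)
        (if ac_connected conn then omega s t - omega_s p - k_ac p * Pac s t else 0)
    & Pac s t = b_ac p * angle_diff conn s t].
Proof.
move=> sol t t0; have [[dW eW] [dth eth] _ Pac_eq _] := sol t t0.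
have IW : is_derive t 1 (Wt s) (Pdc s t - Pac s t).
  by rewrite -eW derive1E; exact: derivableP.
split.
- by apply: is_derive_eq; rewrite subr0.
- rewrite /angle_diff; case: ac_connected Pac_eq => [[_ dthac ethac]|_]; last first.
    exact: is_derive_cst.
  have Ith : is_derive t 1 (theta s) (omega s t).
    by rewrite -eth derive1E; exact: derivableP.
  have Ithac : is_derive t 1 (theta_ac s) (omega_s p + k_ac p * Pac s t).
    by rewrite -ethac derive1E; exact: derivableP.
  by apply: is_derive_eq; rewrite opprD addrA.
- by rewrite /angle_diff; case: ac_connected Pac_eq => [[->]|->]; rewrite ?fctE ?mulr0.
Qed.
Arguments closed_loop_errors {ctrl conn s}.

Hypotheses (kp_ac_gt0 : 0 < kp_ac p) (kp_dc_gt0 : 0 < kp_dc p).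
Hypotheses (kw_ac_gt0 : 0 < kw_ac p) (kw_dc_gt0 : 0 < kw_dc p).
Hypotheses (b_ac_gt0 : 0 < b_ac p) (g_dc_gt0 : 0 < g_dc p).
Hypotheses (k_ac_ge0 : 0 <= k_ac p) (k_dc_ge0 : 0 <= k_dc p).

Lemma dc_den_gt0 : 0 < dc_den.
Proof. by rewrite /dc_den ltr_wpDr // mulr_ge0 ?addr_ge0 // ltW. Qed.

Let dc_den_neq0 : dc_den != 0. Proof. exact: lt0r_neq0 dc_den_gt0. Qed.

Lemma closed_loop_Pdc ctrl conn (s : signals R) :
  closed_loop ctrl conn p s -> dc_connected conn -> forall t : R, 0 <= t ->
  Pdc s t = (g_dc p * kp_dc p * (if ctrl is EnergyPD then Pac s t else 0)
             - g_dc p * kw_dc p * energy_error s t) / dc_den.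
Proof.
move=> sol dc t t0; have [[_ eW] _ ctl _] := sol t t0; rewrite dc => -[Pdc_eq Vdc_eq].
apply: (canRL (mulfK (lt0r_neq0 dc_den_gt0))); rewrite energy_errorE /dc_den.
by case: ctrl {sol} ctl => -[_ Vt_eq]; rewrite mulrDr mulr1 {1}Pdc_eq Vdc_eq Vt_eq ?eW; ring.
Qed.
Arguments closed_loop_Pdc {ctrl conn s}.

Lemma hybrid_ac_reduction (s : signals R) :
  closed_loop HybridDroop ACOnly p s ->
  planar_reduction ACOnly 0 (- b_ac p) (kw_ac p) (- (b_ac p * (kp_ac p + k_ac p)))
    (kw_ac p) (- (kp_ac p * b_ac p)) (kw_dc p) 0 s.
Proof.
move=> sol; split=> t t0; have [dE dA Pac_eq] := closed_loop_errors sol t t0;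
  have [_ _ [om Vt_eq] _ /= Pdc0] := sol t t0.
- by split; apply: is_derive_eq; rewrite /= ?om Pac_eq ?Pdc0 energy_errorE; ring.
- by rewrite om Vt_eq Pac_eq Pdc0 energy_errorE; split; ring.
Qed.

Lemma energyPD_ac_reduction (s : signals R) :
  closed_loop EnergyPD ACOnly p s ->
  planar_reduction ACOnly 0 (- b_ac p) (kw_ac p) (- (b_ac p * (kp_ac p + k_ac p)))
    (kw_ac p) (- (kp_ac p * b_ac p)) (kw_dc p) (- (kp_dc p * b_ac p)) s.
Proof.
move=> sol; split=> t t0; have [dE dA Pac_eq] := closed_loop_errors sol t t0;
  have [[_ eW] _ [om Vt_eq] _ /= Pdc0] := sol t t0; rewrite eW in om Vt_eq.
- by split; apply: is_derive_eq; rewrite /= ?om Pac_eq ?Pdc0 energy_errorE; ring.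
- by rewrite om Vt_eq Pac_eq Pdc0 energy_errorE; split; ring.
Qed.

Lemma hybrid_dc_reduction (s : signals R) :
  closed_loop HybridDroop DCOnly p s ->
  planar_reduction DCOnly (- dc_energy_gain) 0 0 (-1)
    (kw_ac p) 0 (kw_dc p - kp_dc p * dc_energy_gain) 0 s.
Proof.
move=> sol; split=> t t0; have [dE dA Pac_eq] := closed_loop_errors sol t t0;
  have [_ _ [om Vt_eq] _ _] := sol t t0; have Pdc_eq := closed_loop_Pdc sol erefl t t0.
- split; apply: is_derive_eq;
    rewrite /= ?Pdc_eq ?Pac_eq /angle_diff /dc_energy_gain /= energy_errorE; by field.
- rewrite om Vt_eq Pdc_eq Pac_eq /angle_diff /dc_energy_gain /= energy_errorE.
  by split; field.
Qed.

Lemma energyPD_dc_reduction (s : signals R) :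
  closed_loop EnergyPD DCOnly p s ->
  planar_reduction DCOnly (- dc_energy_gain) 0 0 (-1)
    (kw_ac p - kp_ac p * dc_energy_gain) 0 (kw_dc p - kp_dc p * dc_energy_gain) 0 s.
Proof.
move=> sol; split=> t t0; have [dE dA Pac_eq] := closed_loop_errors sol t t0;
  have [[_ eW] _ [om Vt_eq] _ _] := sol t t0; have Pdc_eq := closed_loop_Pdc sol erefl t t0.
- split; apply: is_derive_eq;
    rewrite /= ?Pdc_eq ?Pac_eq /angle_diff /dc_energy_gain /= energy_errorE; by field.
- rewrite om Vt_eq eW Pdc_eq Pac_eq /angle_diff /dc_energy_gain /= energy_errorE.
  by split; field.
Qed.

Lemma hybrid_acdc_reduction (s : signals R) :
  closed_loop HybridDroop ACDC p s ->
  planar_reduction ACDC (- dc_energy_gain) (- b_ac p) (kw_ac p)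
    (- (b_ac p * (kp_ac p + k_ac p))) (kw_ac p) (- (kp_ac p * b_ac p))
    (kw_dc p - kp_dc p * dc_energy_gain) 0 s.
Proof.
move=> sol; split=> t t0; have [dE dA Pac_eq] := closed_loop_errors sol t t0;
  have [_ _ [om Vt_eq] _ _] := sol t t0; have Pdc_eq := closed_loop_Pdc sol erefl t t0.
- split; apply: is_derive_eq;
    rewrite /= ?om ?Pdc_eq Pac_eq /dc_energy_gain energy_errorE; by field.
- rewrite om Vt_eq Pdc_eq Pac_eq /dc_energy_gain energy_errorE.
  by split; field.
Qed.

Lemma energyPD_acdc_reduction (s : signals R) :
  closed_loop EnergyPD ACDC p s ->
  planar_reduction ACDC (- dc_energy_gain) (- ac_coupling_gain)
    (kw_ac p - kp_ac p * dc_energy_gain)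
    (- (kp_ac p * ac_coupling_gain) - k_ac p * b_ac p)
    (kw_ac p - kp_ac p * dc_energy_gain) (- (kp_ac p * ac_coupling_gain))
    (kw_dc p - kp_dc p * dc_energy_gain) (- (kp_dc p * ac_coupling_gain)) s.
Proof.
move=> sol; split=> t t0; have [dE dA Pac_eq] := closed_loop_errors sol t t0;
  have [[_ eW] _ [om Vt_eq] _ _] := sol t t0; have Pdc_eq := closed_loop_Pdc sol erefl t t0.
- split; apply: is_derive_eq; rewrite /= ?om ?eW ?Pdc_eq Pac_eq
    /dc_energy_gain /ac_coupling_gain /dc_den energy_errorE; by field; rewrite -/dc_den.
- rewrite om Vt_eq eW Pdc_eq Pac_eq /dc_energy_gain /ac_coupling_gain /dc_den energy_errorE.
  by split; field; rewrite -/dc_den.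
Qed.

Lemma closed_loop_reduction (ctrl : control) (conn : connection) :
  exists a b c e p1 p2 q1 q2 : R, [/\ a + e < 0, 0 < a * e - b * c &
    forall s, closed_loop ctrl conn p s -> planar_reduction conn a b c e p1 p2 q1 q2 s].
Proof.
have energy_gain_gt0 : 0 < dc_energy_gain by rewrite divr_gt0 ?mulr_gt0 ?dc_den_gt0.
have coupling_gain_gt0 : 0 < ac_coupling_gain.
  by rewrite divr_gt0 ?dc_den_gt0 // mulr_gt0 // ltr_wpDr ?mulr_ge0 // ltW.
have damp_gt0 : 0 < b_ac p * (kp_ac p + k_ac p) by rewrite mulr_gt0 // ltr_wpDr.
have bkw_gt0 : 0 < b_ac p * kw_ac p by rewrite mulr_gt0.
case: ctrl; case: conn.
- by do 8!eexists; split; last exact: hybrid_ac_reduction; lra.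
- by do 8!eexists; split; last exact: hybrid_dc_reduction; lra.
- have := mulr_gt0 energy_gain_gt0 damp_gt0.
  by do 8!eexists; split; last exact: hybrid_acdc_reduction; lra.
- by do 8!eexists; split; last exact: energyPD_ac_reduction; lra.
- by do 8!eexists; split; last exact: energyPD_dc_reduction; lra.
- have kb_ge0 : 0 <= k_ac p * b_ac p by rewrite mulr_ge0 // ltW.
  have := mulr_gt0 kp_ac_gt0 coupling_gain_gt0; have := mulr_gt0 coupling_gain_gt0 kw_ac_gt0.
  have := mulr_ge0 (ltW energy_gain_gt0) kb_ge0.
  by do 8!eexists; split; last exact: energyPD_acdc_reduction; lra.
Qed.

End ClosedLoop.

Arguments closed_loop_reduction {R p}.

Theorem theorem1 (R : realType) (ctrl : control) (conn : connection)
    (p : params R) :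
  0 < kp_ac p -> 0 < kp_dc p -> 0 < kw_ac p -> 0 < kw_dc p ->
  0 < b_ac p -> 0 < g_dc p -> 0 <= k_ac p -> 0 <= k_dc p ->
  (ctrl = HybridDroop -> kp_ac p < kw_ac p) ->
  asymptotically_stable (closed_loop ctrl conn p) (state_norm conn p) /\
  (forall s : signals R, closed_loop ctrl conn p s ->
     [/\ Wt s t @[t --> +oo] --> Wt_s p,
         omega s t @[t --> +oo] --> omega_s p
       & Vt s t @[t --> +oo] --> Vt_s p]).
Proof.
move=> kpa kpd kwa kwd bac gdc kac kdc _.
have [a [b [c [e [p1 [p2 [q1 [q2 [tr det red]]]]]]]]] :=
  closed_loop_reduction kpa kpd kwa kwd bac gdc kac kdc ctrl conn.
split; first split.
- move=> eps eps0; have [del del0 stab] := planar_stable tr det eps eps0.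
  exists del => // s sol; rewrite state_normE; have [ode _] := red s sol.
  exact: stab.
- move=> s sol; have [ode _] := red s sol; have [_ _ max0] := planar_cvg0 tr det ode.
  by rewrite state_normE.
move=> s sol; have [ode out] := red s sol; have [x0 d0 _] := planar_cvg0 tr det ode.
have near_nonneg (P : R -> Prop) : (forall t, 0 <= t -> P t) -> \forall t \near +oo, P t.
  by move=> P0; apply: filterS P0 _; exact: nbhs_pinfty_ge.
split.
- by apply: (affine_cvg 1 0 x0 d0); apply: near_nonneg => t _; rewrite energy_errorE; ring.
- by apply: (affine_cvg p1 p2 x0 d0); apply: near_nonneg => t /out [].
- by apply: (affine_cvg q1 q2 x0 d0); apply: near_nonneg => t /out [].
Qed.
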